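(* Let $(N_0,c,w,P)$ be an RS-situation and $(N_0,v)$ the corresponding RS-game. Then $x\in Core(N_0,v)$ if and only if there exists $w^*=(w_i^* )_{i\in N}\in\mathbb{R}^n$ with $w_i^*\ge c$ for all $i\in N$ and $\sum_{i\in S}\Pi_i^{ret}(q_i^c;w_i^* )\ge v(S)$ for all nonempty $S\subseteq N$, such that \[x_0=\sum_{i\in N}\Pi_i^{sup}(q_i^c;w_i^* )\quad\text{and}\quad x_i=\Pi_i^{ret}(q_i^c;w_i^* )\ \text{ for } i\in N.\]
   Context: Let $c\in\mathbb{R}$. An RS-problem is a triple $(c,w,p)$ where $w:\mathbb{R}_+\to(c,+\infty)$ is decreasing (non-increasing) and continuous, and $p:\mathbb{R}_+\to\mathbb{R}$ is decreasing (non-increasing) and continuous, satisfies $p(0)>w(0)$, and there exists $q>0$ with $p(q)=c$. An RS-situation is a tuple $(N_0,c,w,P)$ where $N=\{1,\dots,n\}$ is the set of retailers, $0$ denotes the supplier, $N_0=N\cup\{0\}$, $P=(p_1,\dots,p_n)$, and $(c,w,p_i)$ is an RS-problem for each $i\in N$. For $S\subseteq N$ write $S_0=S\cup\{0\}$. For $q\ge0$ and $\omega\in\mathbb{R}$, $\Pi_i^{ret}(q;\omega)=(p_i(q)-\omega)q$ and $\Pi_i^{sup}(q;\omega)=(\omega-c)q$. For nonempty $S\subseteq N$, $(q_i^S)_{i\in S}$ is a fixed optimal solution of: maximize $\sum_{i\in S}(p_i(q_i)-w(q_S))q_i$ over $q\in\mathbb{R}_+^{S}$ subject to $p_i(q_i)\ge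 w(q_S)$ for all $i\in S$, where $q_S=\sum_{i\in S}q_i$; $q_S^S=\sum_{i\in S}q_i^S$. For $i\in N$, $q_i^c$ is a fixed optimal solution of: maximize $(p_i(q)-c)q$ over $q\ge0$ subject to $p_i(q)\ge c$. The corresponding RS-game $(N_0,v)$ is the TU game on $N_0$ with $v(\emptyset)=0$ and, for all $S\subseteq N$, $v(S)=\sum_{i\in S}\Pi_i^{ret}(q_i^S;w(q_S^S))$ and $v(S_0)=\sum_{i\in S}\Pi_i^{ret}(q_i^c;c)$. The core is $Core(N_0,v)=\{x\in\mathbb{R}^{N_0}: \sum_{i\in N_0}x_i=v(N_0),\ \sum_{i\in T}x_i\ge v(T)\text{ for all }T\subset N_0\}$. *)

From HB Require Import structures.
From mathcomp Require Import all_boot all_order all_algebra.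
From mathcomp Require Import all_classical all_reals topology normedtype.
Set Implicit Arguments. Unset Strict Implicit. Unset Printing Implicit Defensive.
Import Order.TTheory GRing.Theory Num.Theory numFieldNormedType.Exports.
Local Open Scope ring_scope.

Section RS.
Variable R : realType.

Definition nonincr_on_Rp (f : R -> R) : Prop :=
  forall x y : R, 0 <= x -> x <= y -> f y <= f x.

Local Open Scope classical_set_scope.
Definition RS_problem (c : R) (w p : R -> R) : Prop :=
  (forall x : R, 0 <= x -> c < w x) /\
  nonincr_on_Rp w /\
  {within `[0, +oo[%classic, continuous w} /\
  nonincr_on_Rp p /\
  {within `[0, +oo[%classic, continuous p} /\
  w 0 < p 0 /\
  (exists q : R, 0 < q /\ p q = c).

Local Close Scope classical_set_scope.

Definition RS_situation (n : nat) (c : R) (w : R -> R) (P : 'I_n -> R -> R) :=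
  forall i, RS_problem c w (P i).

Definition Pi_ret (p : R -> R) (q om : R) : R := (p q - om) * q.
Definition Pi_sup (c : R) (q om : R) : R := (om - c) * q.

Definition qsum (n : nat) (S : {set 'I_n}) (q : 'I_n -> R) : R :=
  \sum_(i in S) q i.

Definition S_objective (n : nat) (w : R -> R) (P : 'I_n -> R -> R)
  (S : {set 'I_n}) (q : 'I_n -> R) : R :=
  \sum_(i in S) (P i (q i) - w (qsum S q)) * q i.

Definition S_feasible (n : nat) (w : R -> R) (P : 'I_n -> R -> R)
  (S : {set 'I_n}) (q : 'I_n -> R) : Prop :=
  forall i, i \in S -> 0 <= q i /\ w (qsum S q) <= P i (q i).

(* (q_i^S)_{i in S} is an optimal solution of the coalition problem of S
   (only the values on S are relevant). *)
Definition S_optimal (n : nat) (w : R -> R) (P : 'I_n -> R -> R)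
  (S : {set 'I_n}) (q : 'I_n -> R) : Prop :=
  S_feasible w P S q /\
  forall q' : 'I_n -> R, S_feasible w P S q' ->
    S_objective w P S q' <= S_objective w P S q.

Definition c_optimal (c : R) (p : R -> R) (q : R) : Prop :=
  [/\ 0 <= q, c <= p q &
      forall q' : R, 0 <= q' -> c <= p q' -> Pi_ret p q' c <= Pi_ret p q c].

(* The RS-game on N_0 = option 'I_n (None = supplier 0). *)
Definition RS_game (n : nat) (c : R) (w : R -> R) (P : 'I_n -> R -> R)
  (qS : {set 'I_n} -> 'I_n -> R) (qc : 'I_n -> R)
  (T : {set option 'I_n}) : R :=
  let S := [set i : 'I_n | Some i \in T] in
  if None \in T then \sum_(i in S) Pi_ret (P i) (qc i) c
  else \sum_(i in S) Pi_ret (P i) (qS S i) (w (qsum S (qS S))).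

Definition core (n : nat) (v : {set option 'I_n} -> R) (x : option 'I_n -> R) : Prop :=
  \sum_(k in [set: option 'I_n]) x k = v [set: option 'I_n] /\
  forall T : {set option 'I_n}, T \proper [set: option 'I_n] ->
    v T <= \sum_(k in T) x k.

End RS.

(* A core allocation pays retailer i at most its stand-alone profit with the
   supplier (remove i from the grand coalition) and at least v({i}) >= 0, so
   its payoff is the retail profit of q_i^c at some wholesale price
   w_i^* >= c; efficiency then forces the supplier to collect the
   margins (w_i^* - c) q_i^c.  Conversely, for such prices the coalitions with
   the supplier are covered because these margins are nonnegative, and those
   without the supplier by the hypothesis on w^*. *)
From HB Require Import structures.
From mathcomp Require Import all_boot all_order all_algebra.
From mathcomp Require Import reals.
From mathcomp Require Import lra ring.
Set Implicit Arguments. Unset Strict Implicit. Unset Printing Implicit Defensive.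
Import Order.TTheory GRing.Theory Num.Theory.
Local Open Scope ring_scope.

Section OptionSets.
Variable n : nat.
Implicit Types (S : {set 'I_n}) (T : {set option 'I_n}).

Lemma None_notin_imset_Some S : (None \in Some @: S) = false.
Proof. by apply/negbTE/imsetP => -[]. Qed.

Lemma preim_Some_imset S : [set i | Some i \in Some @: S] = S.
Proof. by apply/setP => i; rewrite inE (mem_imset _ _ (@Some_inj _)). Qed.

Lemma preim_Some_setT : [set i : 'I_n | Some i \in [set: option 'I_n]] = [set: 'I_n].
Proof. by apply/setP => i; rewrite !inE. Qed.

Lemma preim_Some_setC1 i :
  [set j | Some j \in [set~ Some i]] = [set~ i] :> {set 'I_n}.
Proof. by apply/setP => j; rewrite !inE inj_eq //; apply: Some_inj. Qed.

Lemma imset_Some_preim T : None \notin T -> T = Some @: [set i | Some i \in T].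
Proof.
move=> /negbTE NT; apply/setP => -[i|]; last by rewrite None_notin_imset_Some.
by rewrite (mem_imset _ _ (@Some_inj _)) inE.
Qed.

Lemma imset_Some_proper S : Some @: S \proper [set: option 'I_n].
Proof.
rewrite properT; apply/eqP => /setP /(_ None).
by rewrite None_notin_imset_Some in_setT.
Qed.

Lemma setC1_proper (k : option 'I_n) : [set~ k] \proper [set: option 'I_n].
Proof. by rewrite properT; apply/eqP => /setP /(_ k); rewrite !inE eqxx. Qed.

Variable R : realType.
Implicit Type F : option 'I_n -> R.

Lemma sum_imset_Some F S : \sum_(k in Some @: S) F k = \sum_(i in S) F (Some i).
Proof. by rewrite big_imset //; apply: in2W; apply: Some_inj. Qed.

Lemma sum_option_set F T :
  \sum_(k in T) F k = (if None \in T then F None else 0)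
     + \sum_(i in [set i | Some i \in T]) F (Some i).
Proof.
rewrite (bigID (pred1 None)) /= -sum_imset_Some; congr (_ + _).
  case: ifP => NT.
    by rewrite (big_pred1 None) // => k /=; rewrite andbC; case: eqP => // ->.
  by rewrite big_pred0 // => k /=; rewrite andbC; case: eqP => // ->.
apply: eq_bigl => -[i|]; last by rewrite andbF None_notin_imset_Some.
by rewrite (mem_imset _ _ (@Some_inj _)) inE andbT.
Qed.

Lemma sum_option_setT F :
  \sum_(k in [set: option 'I_n]) F k = F None + \sum_(i < n) F (Some i).
Proof.
rewrite sum_option_set in_setT preim_Some_setT.
by congr (_ + _); apply: eq_bigl => i; rewrite inE.
Qed.

End OptionSets.

Section CoreBounds.
Variables (R : realType) (n : nat).
Variables (v : {set option 'I_n} -> R) (x : option 'I_n -> R).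
Hypothesis x_core : core v x.

Lemma core_le_marginal k : x k <= v [set: option 'I_n] - v [set~ k].
Proof.
case: x_core => efficient /(_ _ (setC1_proper k)) rational.
by rewrite -efficient (big_setD1 k) ?in_setT // setTD -addrA lerDl subr_ge0.
Qed.

Lemma core_imset_Some (S : {set 'I_n}) : v (Some @: S) <= \sum_(i in S) x (Some i).
Proof.
by case: x_core => _ /(_ _ (imset_Some_proper S)); rewrite sum_imset_Some.
Qed.

End CoreBounds.

Section Prices.
Variables (R : realType) (c : R) (p : R -> R).

Lemma Pi_sup_ge0 q om : 0 <= q -> c <= om -> 0 <= Pi_sup c q om.
Proof. by move=> q_ge0 c_le_om; rewrite mulr_ge0 ?subr_ge0. Qed.

Lemma Pi_supD_ret q om : Pi_sup c q om + Pi_ret p q om = Pi_ret p q c.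
Proof. rewrite /Pi_sup /Pi_ret; ring. Qed.

(* The wholesale price at which selling q yields retail profit y; the value
   for q = 0 is arbitrary, and only y = 0 is then attainable. *)
Definition price_for_profit (q y : R) : R := if q == 0 then c else p q - y / q.

Lemma Pi_ret_price_for_profit q y :
  0 <= y -> y <= Pi_ret p q c -> Pi_ret p q (price_for_profit q y) = y.
Proof.
rewrite /price_for_profit /Pi_ret; case: eqP => [-> | /eqP q_neq0] y_ge0.
  by rewrite !mulr0 => y_le0; apply/le_anti; rewrite y_le0 y_ge0.
by rewrite subKr mulfVK.
Qed.

Lemma price_for_profit_ge q y :
  0 <= q -> y <= Pi_ret p q c -> c <= price_for_profit q y.
Proof.
rewrite /price_for_profit; case: eqP => // /eqP q_neq0 q_ge0 y_le.
have q_gt0 : 0 < q by rewrite lt_def q_neq0.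
by rewrite lerBrDr -lerBrDl ler_pdivrMr.
Qed.

End Prices.

Section RSGame.
Variables (R : realType) (n : nat) (c : R) (w : R -> R) (P : 'I_n -> R -> R).
Variables (qS : {set 'I_n} -> 'I_n -> R) (qc : 'I_n -> R).
Hypothesis situation : RS_situation c w P.
Hypothesis qS_optimal : forall S : {set 'I_n}, S != set0 -> S_optimal w P S (qS S).
Hypothesis qc_ge0 : forall i, 0 <= qc i.

Local Notation v := (RS_game c w P qS qc).

Lemma RS_game_supplier (T : {set option 'I_n}) :
  None \in T -> v T = \sum_(i in [set i | Some i \in T]) Pi_ret (P i) (qc i) c.
Proof. by rewrite /RS_game => ->. Qed.

Lemma RS_game_retailers (S : {set 'I_n}) :
  v (Some @: S) = \sum_(i in S) Pi_ret (P i) (qS S i) (w (qsum S (qS S))).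
Proof. by rewrite /RS_game None_notin_imset_Some preim_Some_imset. Qed.

(* Ordering nothing is feasible, since w 0 < p_i 0. *)
Lemma RS_game_retailers_ge0 (S : {set 'I_n}) : 0 <= v (Some @: S).
Proof.
have [-> | S_neq0] := eqVneq S set0; first by rewrite RS_game_retailers big_set0.
rewrite RS_game_retailers; case: (qS_optimal S_neq0) => _ /(_ (fun=> 0)).
rewrite /S_objective big1 => [|i _]; last by rewrite mulr0.
apply=> i _; split=> //; rewrite /qsum big1 //.
by case: (situation i) => [_ [_ [_ [_ [_ [/ltW ? _]]]]]].
Qed.

Lemma RS_game_marginal_retailer i :
  v [set: option 'I_n] - v [set~ Some i] = Pi_ret (P i) (qc i) c.
Proof.
rewrite !RS_game_supplier ?inE // preim_Some_setT preim_Some_setC1.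
by rewrite (big_setD1 i) ?in_setT // setTD addrK.
Qed.

Section CoreToPrices.
Variable x : option 'I_n -> R.
Hypothesis x_core : core v x.

Lemma core_retailer_ge0 i : 0 <= x (Some i).
Proof.
have := core_imset_Some x_core [set i]; rewrite big_set1.
exact/le_trans/RS_game_retailers_ge0.
Qed.

Lemma core_retailer_le i : x (Some i) <= Pi_ret (P i) (qc i) c.
Proof. by rewrite -RS_game_marginal_retailer; apply: core_le_marginal. Qed.

Let wst i := price_for_profit c (P i) (qc i) (x (Some i)).

Lemma core_retailer_price i : x (Some i) = Pi_ret (P i) (qc i) (wst i).
Proof. by rewrite Pi_ret_price_for_profit ?core_retailer_ge0 ?core_retailer_le. Qed.

Lemma core_supplier_price : x None = \sum_(i < n) Pi_sup c (qc i) (wst i).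
Proof.
case: x_core => efficient _.
move: efficient; rewrite sum_option_setT RS_game_supplier ?inE // preim_Some_setT.
have -> : \sum_(i in [set: 'I_n]) Pi_ret (P i) (qc i) c
        = \sum_(i < n) (Pi_sup c (qc i) (wst i) + x (Some i)).
  apply: eq_big => i; rewrite ?inE // => _.
  by rewrite core_retailer_price Pi_supD_ret.
rewrite big_split /=; lra.
Qed.

Lemma core_prices : exists wst : 'I_n -> R,
  [/\ (forall i, c <= wst i),
      (forall S : {set 'I_n}, S != set0 ->
         v (Some @: S) <= \sum_(i in S) Pi_ret (P i) (qc i) (wst i)),
      x None = \sum_(i < n) Pi_sup c (qc i) (wst i)
    & forall i, x (Some i) = Pi_ret (P i) (qc i) (wst i)].
Proof.
exists wst; split=> [i | S _ | | i].
- by apply: price_for_profit_ge; [exact: qc_ge0 | exact: core_retailer_le].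
- under eq_bigr => i _ do rewrite -core_retailer_price.
  exact: core_imset_Some.
- exact: core_supplier_price.
- exact: core_retailer_price.
Qed.

End CoreToPrices.

Section PricesToCore.
Variables (wst : 'I_n -> R) (x : option 'I_n -> R).
Hypothesis wst_ge : forall i, c <= wst i.
Hypothesis wst_rational : forall S : {set 'I_n}, S != set0 ->
  v (Some @: S) <= \sum_(i in S) Pi_ret (P i) (qc i) (wst i).
Hypothesis x_supplier : x None = \sum_(i < n) Pi_sup c (qc i) (wst i).
Hypothesis x_retailer : forall i, x (Some i) = Pi_ret (P i) (qc i) (wst i).

Lemma prices_efficient : \sum_(k in [set: option 'I_n]) x k = v [set: option 'I_n].
Proof.
rewrite sum_option_setT x_supplier RS_game_supplier ?inE // preim_Some_setT.
under [in RHS]eq_bigl => i do rewrite inE.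
rewrite -big_split /=; apply: eq_bigr => i _.
by rewrite x_retailer Pi_supD_ret.
Qed.

Lemma prices_rational_supplier (T : {set option 'I_n}) :
  None \in T -> v T <= \sum_(k in T) x k.
Proof.
move=> NT; rewrite RS_game_supplier // sum_option_set NT x_supplier.
set S := [set i | Some i \in T].
under [X in _ <= _ + X]eq_bigr => i _ do rewrite x_retailer.
have sup_ge0 i : 0 <= Pi_sup c (qc i) (wst i) by apply: Pi_sup_ge0.
rewrite [\sum_(i < n) _](bigID (mem S)) /= addrAC -big_split /=.
under [X in _ <= X + _]eq_bigr => i _ do rewrite Pi_supD_ret.
by rewrite lerDl sumr_ge0.
Qed.

Lemma prices_rational_retailers (S : {set 'I_n}) :
  v (Some @: S) <= \sum_(k in Some @: S) x k.
Proof.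
rewrite sum_imset_Some; under eq_bigr => i _ do rewrite x_retailer.
have [-> | S_neq0] := eqVneq S set0; last exact: wst_rational.
by rewrite RS_game_retailers !big_set0.
Qed.

Lemma prices_core : core v x.
Proof.
split; first exact: prices_efficient.
move=> T _; have [/prices_rational_supplier // | NT] := boolP (None \in T).
by rewrite (imset_Some_preim NT); apply: prices_rational_retailers.
Qed.

End PricesToCore.

End RSGame.

Theorem theorem5p6 (R : realType) (n : nat) (c : R) (w : R -> R)
  (P : 'I_n -> R -> R)
  (qS : {set 'I_n} -> 'I_n -> R) (qc : 'I_n -> R)
  (Hsit : RS_situation c w P)
  (HqS : forall S : {set 'I_n}, S != set0 -> S_optimal w P S (qS S))
  (Hqc : forall i : 'I_n, c_optimal c (P i) (qc i))
  (x : option 'I_n -> R) :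
  core (RS_game c w P qS qc) x <->
  exists wst : 'I_n -> R,
    [/\ (forall i : 'I_n, c <= wst i),
        (forall S : {set 'I_n}, S != set0 ->
           RS_game c w P qS qc (Some @: S)
             <= \sum_(i in S) Pi_ret (P i) (qc i) (wst i)),
        x None = \sum_(i < n) Pi_sup c (qc i) (wst i)
      & forall i : 'I_n, x (Some i) = Pi_ret (P i) (qc i) (wst i)].
Proof.
have qc_ge0 i : 0 <= qc i by case: (Hqc i).
split; first exact: core_prices.
case=> wst [wst_ge wst_rational x_supplier x_retailer].
exact: (prices_core (x := x) qc_ge0 wst_ge wst_rational x_supplier x_retailer).
Qed.
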